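(* For $a\in\{1,\dots,n\}$ let $z_a = q\omega_a - (q-1)\psi_a\psi_a^*\omega_a^{k+1}\in\mathrm{Cl}_q(n,k)$. Then each $z_a$ is central in $\mathrm{Cl}_q(n,k)$, and for every positive integer $r$, \[ z_a^r = q^r\omega_a^r - (q^r-1)\psi_a\psi_a^*\omega_a^{k+r}. \] In particular $z_a^k=\psi_a\psi_a^*+\psi_a^*\psi_a$, so $z_a^{2k}=1$.
   Context: Let $\mathbb{k}$ be a field of characteristic different from $2$, let $q\in\mathbb{k}^\times$, and let $n,k$ be positive integers. The quantum Clifford algebra $\mathrm{Cl}_q(n,k)$ is the unital associative $\mathbb{k}$-algebra generated by $\psi_a,\psi_a^*,\omega_a,\omega_a^{-1}$ for $a\in\{1,\dots,n\}$, subject to the relations (for all $a,b\in\{1,\dots,n\}$): $\omega_a\omega_b=\omega_b\omega_a$; $\omega_a\omega_a^{-1}=1$; $\omega_a\psi_b=q^{\delta_{ab}}\psi_b\omega_a$; $\omega_a\psi_b^*=q^{-\delta_{ab}}\psi_b^*\omega_a$; $\psi_a\psi_b+\psi_b\psi_a=0$; $\psi_a^*\psi_b^*+\psi_b^*\psi_a^*=0$; $\psi_a\psi_a^*+q^k\psi_a^*\psi_a=\omega_a^{-k}$; $\psi_a\psi_a^*+q^{-k}\psi_a^*\psi_a=\omega_a^{k}$; and $\psi_a\psi_b^*+\psi_b^*\psi_a=0$ if $a\neq b$. *)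

From HB Require Import structures.
From mathcomp Require Import all_boot all_order all_algebra.
Set Implicit Arguments. Unset Strict Implicit. Unset Printing Implicit Defensive.
Import GRing.Theory.
Local Open Scope ring_scope.

(* The quantum Clifford algebra Cl_q(n,k) is presented by generators and
   relations.  We encode it through its universal property: a family of
   elements psi a, psis a (= psi_a star), om a (= omega_a), omi a (= omega_a^{-1})
   of an F-algebra A satisfying the defining relations, with A generated
   (as a unital F-algebra) by these elements. *)

Definition qdelta (F : fieldType) (n : nat) (q : F) (a b : 'I_n) : F :=
  if a == b then q else 1.

Definition clq_relations (F : fieldType) (A : algType F) (n k : nat) (q : F)
  (psi psis om omi : 'I_n -> A) : Prop :=
     (forall a b, om a * om b = om b * om a)
  /\ (forall a, om a * omi a = 1)
  /\ (forall a b, om a * psi b = qdelta q a b *: (psi b * om a))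
  /\ (forall a b, om a * psis b = qdelta q^-1 a b *: (psis b * om a))
  /\ (forall a b, psi a * psi b + psi b * psi a = 0)
  /\ (forall a b, psis a * psis b + psis b * psis a = 0)
  /\ (forall a, psi a * psis a + q ^+ k *: (psis a * psi a) = omi a ^+ k)
  /\ (forall a, psi a * psis a + q ^- k *: (psis a * psi a) = om a ^+ k)
  /\ (forall a b, a != b -> psi a * psis b + psis b * psi a = 0).

Definition in_generated_subalg (F : fieldType) (A : algType F)
  (S : A -> Prop) (x : A) : Prop :=
  forall P : A -> Prop,
    P 1 -> (forall y, S y -> P y) ->
    (forall y z, P y -> P z -> P (y + z)) ->
    (forall y z, P y -> P z -> P (y * z)) ->
    (forall (c : F) y, P y -> P (c *: y)) ->
    P x.

Definition clq_generators (n : nat) (A : Type) (psi psis om omi : 'I_n -> A)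
  (x : A) : Prop :=
  exists a, x = psi a \/ x = psis a \/ x = om a \/ x = omi a.

Definition zelt (F : fieldType) (A : algType F) (n k : nat) (q : F)
  (psi psis om : 'I_n -> A) (a : 'I_n) : A :=
  q *: om a - (q - 1) *: (psi a * psis a * om a ^+ k.+1).

(* Write e = psi_a psi_a^*.  Multiplying the two mixed relations on the left
   by psi_a^* gives e^2 = e omega_a^k = e omega_a^-k, so e omega_a^2k = e;
   since omega_a commutes with e, the formula for z_a^r follows by
   induction on r.  At r = k the relation for omega_a^k turns z_a^k into
   e + psi_a^* psi_a, whose square is 1: the cross terms vanish because
   psi_a^2 = psi_a^*^2 = 0, and the squares add up to omega_a^k omega_a^-k.
   Centrality is checked on the generators: for b <> a, omega_b commutes
   with omega_a and e, and psi_b, psi_b^* anticommute with both factors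
   of e; for b = a it is a direct computation using
   psi_a psi_a^* psi_a = q^-k psi_a omega_a^-k. *)

From HB Require Import structures.
From mathcomp Require Import all_boot all_order all_algebra.
From mathcomp Require Import ring zify.
Set Implicit Arguments.
Unset Strict Implicit.
Unset Printing Implicit Defensive.
Import GRing.Theory.
Local Open Scope ring_scope.

Lemma double_eq0 (F : fieldType) (V : lmodType F) (v : V) :
  (2 \notin [pchar F])%N -> v + v = 0 -> v = 0.
Proof.
rewrite inE /= => two_neq0 vv0; apply/eqP.
have := scaler_eq0 2%:R v; rewrite (negbTE two_neq0) /= => <-.
by rewrite scaler_nat mulr2n vv0.
Qed.

Section AlgebraCommutation.
Variables (F : fieldType) (A : algType F).
Implicit Types (x y z : A) (c : F).

Lemma commrZ x y c : GRing.comm x y -> GRing.comm x (c *: y).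
Proof. by rewrite /GRing.comm -scalerAr -scalerAl => ->. Qed.

Lemma commr_anticomm x y z :
  x * y + y * x = 0 -> x * z + z * x = 0 -> GRing.comm x (y * z).
Proof.
move=> /eqP; rewrite addr_eq0 => /eqP xy; move=> /eqP; rewrite addr_eq0 => /eqP xz.
by rewrite /GRing.comm mulrA xy mulNr -(mulrA y x z) xz mulrN opprK mulrA.
Qed.

Lemma commr_inverse x y z :
  x * y = 1 -> y * x = 1 -> GRing.comm x z -> GRing.comm y z.
Proof.
move=> xy yx xz.
by rewrite /GRing.comm -[y * z]mulr1 -xy mulrA -(mulrA y) -xz mulrA yx mul1r.
Qed.

Lemma commr_generated (S : A -> Prop) x z :
  (forall y, S y -> GRing.comm y z) -> in_generated_subalg S x -> GRing.comm x z.
Proof.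
move=> Sz gen; apply: (gen (fun y => GRing.comm y z)).
- exact/commr_sym/commr1.
- exact: Sz.
- by move=> y y' yz y'z; apply/commr_sym/commrD; apply/commr_sym.
- by move=> y y' yz y'z; apply/commr_sym/commrM; apply/commr_sym.
- by move=> c y yz; apply/commr_sym/commrZ/commr_sym.
Qed.

Lemma qcommrX x y c n : x * y = c *: (y * x) -> x ^+ n * y = c ^+ n *: (y * x ^+ n).
Proof.
move=> xy; elim: n => [|n IHn]; first by rewrite !expr0 mul1r mulr1 scale1r.
by rewrite exprS -mulrA IHn -scalerAr [x * (y * _)]mulrA xy -scalerAl scalerA -exprSr mulrA.
Qed.

Lemma qcommr_mul x y y' c c' :
  x * y = c *: (y * x) -> x * y' = c' *: (y' * x) -> c * c' = 1 ->
  GRing.comm x (y * y').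
Proof.
move=> xy xy' cc'.
by rewrite /GRing.comm mulrA xy -scalerAl -(mulrA y x y') xy' -scalerAr scalerA cc' scale1r mulrA.
Qed.

Lemma expr_inverse x y n : x * y = 1 -> x ^+ n * y ^+ n = 1.
Proof.
move=> xy; elim: n => [|n IHn]; first by rewrite !expr0 mul1r.
by rewrite exprSr exprS mulrA -(mulrA _ x) xy mulr1.
Qed.

Lemma left_inverse_of_expr x y n :
  x * y = 1 -> y ^+ n.+1 * x ^+ n.+1 = 1 -> y * x = 1.
Proof.
move=> xy yx_n; have y_eq : y = y ^+ n.+1 * x ^+ n.
  by rewrite -[y in LHS]mul1r -yx_n (exprSr x) mulrA -(mulrA _ x) xy mulr1.
by rewrite [y in LHS]y_eq -mulrA -exprSr.
Qed.

End AlgebraCommutation.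

Section OneMode.
Variables (F : fieldType) (A : algType F) (q : F) (k : nat) (w wi p s : A).
Hypotheses (q_neq0 : q != 0)
  (w_p : w * p = q *: (p * w)) (w_s : w * s = q^-1 *: (s * w))
  (p_sq : p * p = 0) (s_sq : s * s = 0)
  (ps_sp_wi : p * s + q ^+ k *: (s * p) = wi ^+ k)
  (ps_sp_w : p * s + q ^- k *: (s * p) = w ^+ k)
  (w_wi : w * wi = 1).

Local Notation z := (q *: w - (q - 1) *: (p * s * w ^+ k.+1)).

Lemma commr_w_ps : GRing.comm w (p * s).
Proof. by apply: qcommr_mul w_p w_s _; rewrite mulfV. Qed.

Lemma commr_w_sp : GRing.comm w (s * p).
Proof. by apply: qcommr_mul w_s w_p _; rewrite mulVf. Qed.

Lemma commr_ps_expw n : GRing.comm (p * s) (w ^+ n).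
Proof. exact/commrX/commr_sym/commr_w_ps. Qed.

(* Only w * wi = 1 is assumed; the left inverse comes from wi^k being the
   element p s + q^k s p, which commutes with w. *)
Lemma expwi_expw : wi ^+ k * w ^+ k = 1.
Proof.
have wk_wik : GRing.comm (w ^+ k) (wi ^+ k).
  apply/commr_sym/commrX; rewrite -ps_sp_wi; apply/commr_sym/commrD.
    exact: commr_w_ps.
  exact/commrZ/commr_w_sp.
by rewrite -wk_wik expr_inverse.
Qed.

Lemma wi_w : (0 < k)%N -> wi * w = 1.
Proof. by case: k expwi_expw => // k' wik_wk _; apply: left_inverse_of_expr w_wi wik_wk. Qed.

Lemma sps_w : s * p * s = s * w ^+ k.
Proof. by rewrite -ps_sp_w mulrDr -scalerAr [s * (s * p)]mulrA s_sq mul0r scaler0 addr0 mulrA. Qed.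

Lemma sps_wi : s * p * s = s * wi ^+ k.
Proof. by rewrite -ps_sp_wi mulrDr -scalerAr [s * (s * p)]mulrA s_sq mul0r scaler0 addr0 mulrA. Qed.

Lemma psp_wi : p * s * p = q ^- k *: (p * wi ^+ k).
Proof.
rewrite -ps_sp_wi mulrDr [p * (p * s)]mulrA p_sq mul0r add0r -scalerAr scalerA.
by rewrite mulVf ?expf_neq0 // scale1r mulrA.
Qed.

Lemma ps_sq : p * s * (p * s) = p * s * w ^+ k.
Proof. by rewrite -mulrA [s * (p * s)]mulrA sps_w mulrA. Qed.

Lemma ps_expw_2k N : p * s * w ^+ (k + k + N) = p * s * w ^+ N.
Proof.
have ps_sq_wi : p * s * (p * s) = p * s * wi ^+ k.
  by rewrite -mulrA [s * (p * s)]mulrA sps_wi mulrA.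
by rewrite !exprD !mulrA -ps_sq ps_sq_wi -(mulrA _ (wi ^+ k)) expwi_expw mulr1.
Qed.

Lemma ps_expw_mul m n :
  p * s * w ^+ m * (p * s * w ^+ n) = p * s * w ^+ (k + m + n).
Proof.
by rewrite mulrA -(mulrA _ (w ^+ m)) -commr_ps_expw mulrA ps_sq -!mulrA -!exprD addnA.
Qed.

Lemma zpowS r :
  z ^+ r.+1 = q ^+ r.+1 *: w ^+ r.+1 - (q ^+ r.+1 - 1) *: (p * s * w ^+ (k + r.+1)).
Proof.
elim: r => [|r IHr]; first by rewrite !expr1 addn1.
rewrite exprSr IHr mulrBl !mulrBr -!scalerAl -!scalerAr !scalerA.
have -> : w ^+ r.+1 * (p * s * w ^+ k.+1) = p * s * w ^+ (k + r.+2).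
  by rewrite mulrA -commr_ps_expw -mulrA -exprD; congr (_ * w ^+ _); lia.
have -> : p * s * w ^+ (k + r.+1) * w = p * s * w ^+ (k + r.+2).
  by rewrite -mulrA -exprSr -addnS.
rewrite ps_expw_mul (_ : (k + (k + r.+1) + k.+1 = k + k + (k + r.+2))%N); last by lia.
rewrite ps_expw_2k -!exprSr -scalerBl -addrA -opprD -scalerDl.
by congr (_ *: _ - _ *: _); rewrite (exprSr q r.+1); ring.
Qed.

Lemma zpow_k : (0 < k)%N -> z ^+ k = p * s + s * p.
Proof.
move=> k_gt0; have := zpowS k.-1; rewrite prednK // => ->.
rewrite -[(k + k)%N]addn0 ps_expw_2k mulr1.
have -> : s * p = q ^+ k *: w ^+ k - q ^+ k *: (p * s).
  by rewrite -ps_sp_w scalerDr scalerA mulfV ?expf_neq0 // scale1r addrC addKr.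
by rewrite scalerBl scale1r opprB addrCA.
Qed.

Lemma ps_sp : p * s * (s * p) = 0.
Proof. by rewrite -mulrA [s * (s * p)]mulrA s_sq mul0r mulr0. Qed.

Lemma sp_ps : s * p * (p * s) = 0.
Proof. by rewrite -mulrA [p * (p * s)]mulrA p_sq mul0r mulr0. Qed.

Lemma zpow_2k : (0 < k)%N -> z ^+ (2 * k) = 1.
Proof.
move=> k_gt0; rewrite mulnC exprM zpow_k // expr2 mulrDl !mulrDr ps_sp sp_ps addr0 add0r.
rewrite -(expr_inverse k w_wi) -ps_sp_w -ps_sp_wi mulrDl !mulrDr.
rewrite -!scalerAl -!scalerAr ps_sp sp_ps !scaler0 addr0 add0r scalerA.
by rewrite mulVf ?expf_neq0 // scale1r.
Qed.

Lemma commr_z x : GRing.comm x w -> GRing.comm x (p * s) -> GRing.comm x z.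
Proof.
move=> xw xps; apply: commrB; apply: commrZ => //.
exact/commrM/commrX.
Qed.

Lemma commr_p_z : GRing.comm p z.
Proof.
rewrite /GRing.comm mulrBr mulrBl -!scalerAr -!scalerAl !mulrA p_sq !mul0r scaler0 subr0.
rewrite w_p -!mulrA (qcommrX _ w_p) -!scalerAr !mulrA.
have -> : p * s * p * w ^+ k.+1 = q ^- k *: (p * w).
  by rewrite psp_wi -scalerAl exprSr !mulrA -(mulrA p) expwi_expw mulr1.
rewrite !scalerA -scalerBl; congr (_ *: _).
by rewrite exprS; field; rewrite expf_neq0.
Qed.

Lemma commr_s_z : GRing.comm s z.
Proof.
rewrite /GRing.comm mulrBr mulrBl -!scalerAr -!scalerAl !mulrA sps_wi w_s.
rewrite -!mulrA (qcommrX _ w_s) -!scalerAr [s * (s * _)]mulrA s_sq mul0r mulr0 !scaler0 subr0.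
rewrite exprSr [wi ^+ k * _]mulrA expwi_expw mul1r scalerA mulfV // scale1r -scalerBl.
by rewrite (_ : q - (q - 1) = 1) ?scale1r //; ring.
Qed.

End OneMode.

Section CliffordRelations.
Variables (F : fieldType) (A : algType F) (n k : nat) (q : F).
Variables (psi psis om omi : 'I_n -> A).
Hypotheses (two_notin_pchar : (2 \notin [pchar F])%N) (q_neq0 : q != 0)
  (k_gt0 : (0 < k)%N) (rel : clq_relations k q psi psis om omi).

Local Notation z := (zelt k q psi psis om).

Lemma om_comm a b : om a * om b = om b * om a.
Proof. by case: rel. Qed.

Lemma om_omi a : om a * omi a = 1.
Proof. by case: rel => _ []. Qed.

Lemma om_psi_diag a : om a * psi a = q *: (psi a * om a).
Proof. by case: rel => _ [_ [om_psi _]]; rewrite om_psi /qdelta eqxx. Qed.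

Lemma om_psis_diag a : om a * psis a = q^-1 *: (psis a * om a).
Proof. by case: rel => _ [_ [_ [om_psis _]]]; rewrite om_psis /qdelta eqxx. Qed.

Lemma commr_om_psi a b : a != b -> GRing.comm (om a) (psi b).
Proof.
by case: rel => _ [_ [om_psi _]] ab; rewrite /GRing.comm om_psi /qdelta (negbTE ab) scale1r.
Qed.

Lemma commr_om_psis a b : a != b -> GRing.comm (om a) (psis b).
Proof.
by case: rel => _ [_ [_ [om_psis _]]] ab; rewrite /GRing.comm om_psis /qdelta (negbTE ab) scale1r.
Qed.

Lemma psi_anticomm a b : psi a * psi b + psi b * psi a = 0.
Proof. by case: rel => _ [_ [_ [_ []]]]. Qed.

Lemma psis_anticomm a b : psis a * psis b + psis b * psis a = 0.
Proof. by case: rel => _ [_ [_ [_ [_ []]]]]. Qed.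

Lemma psi_psis_omi a : psi a * psis a + q ^+ k *: (psis a * psi a) = omi a ^+ k.
Proof. by case: rel => _ [_ [_ [_ [_ [_ []]]]]]. Qed.

Lemma psi_psis_om a : psi a * psis a + q ^- k *: (psis a * psi a) = om a ^+ k.
Proof. by case: rel => _ [_ [_ [_ [_ [_ [_ []]]]]]]. Qed.

Lemma psi_psis_anticomm a b : a != b -> psi a * psis b + psis b * psi a = 0.
Proof. by case: rel => _ [_ [_ [_ [_ [_ [_ [_ anti]]]]]]]; apply: anti. Qed.

Lemma psi_sq a : psi a * psi a = 0.
Proof. exact: double_eq0 two_notin_pchar (psi_anticomm a a). Qed.

Lemma psis_sq a : psis a * psis a = 0.
Proof. exact: double_eq0 two_notin_pchar (psis_anticomm a a). Qed.

Lemma zelt_powS a r :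
  z a ^+ r.+1
  = q ^+ r.+1 *: om a ^+ r.+1 - (q ^+ r.+1 - 1) *: (psi a * psis a * om a ^+ (k + r.+1)).
Proof.
exact: zpowS q_neq0 (om_psi_diag a) (om_psis_diag a) (psis_sq a)
  (psi_psis_omi a) (psi_psis_om a) (om_omi a) r.
Qed.

Lemma zelt_pow_k a : z a ^+ k = psi a * psis a + psis a * psi a.
Proof.
exact: zpow_k q_neq0 (om_psi_diag a) (om_psis_diag a) (psis_sq a)
  (psi_psis_omi a) (psi_psis_om a) (om_omi a) k_gt0.
Qed.

Lemma zelt_pow_2k a : z a ^+ (2 * k) = 1.
Proof.
exact: zpow_2k q_neq0 (om_psi_diag a) (om_psis_diag a) (psi_sq a) (psis_sq a)
  (psi_psis_omi a) (psi_psis_om a) (om_omi a) k_gt0.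
Qed.

Lemma commr_om_zelt b a : GRing.comm (om b) (z a).
Proof.
apply: commr_z; first exact: om_comm.
have [->|ba] := eqVneq b a; first exact: commr_w_ps q_neq0 (om_psi_diag a) (om_psis_diag a).
by apply: commrM; [apply: commr_om_psi | apply: commr_om_psis].
Qed.

Lemma commr_omi_zelt b a : GRing.comm (omi b) (z a).
Proof.
apply: commr_inverse (om_omi b) _ (commr_om_zelt b a).
exact: wi_w q_neq0 (om_psi_diag b) (om_psis_diag b) (psi_psis_omi b) (om_omi b) k_gt0.
Qed.

Lemma commr_psi_zelt b a : GRing.comm (psi b) (z a).
Proof.
have [->|ba] := eqVneq b a.
  exact: commr_p_z q_neq0 (om_psi_diag a) (om_psis_diag a) (psi_sq a) (psi_psis_omi a) (om_omi a).
apply: commr_z; first by apply/commr_sym/commr_om_psi; rewrite eq_sym.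
by apply: commr_anticomm; [apply: psi_anticomm | apply: psi_psis_anticomm].
Qed.

Lemma commr_psis_zelt b a : GRing.comm (psis b) (z a).
Proof.
have [->|ba] := eqVneq b a.
  exact: commr_s_z q_neq0 (om_psi_diag a) (om_psis_diag a) (psis_sq a) (psi_psis_omi a) (om_omi a).
apply: commr_z; first by apply/commr_sym/commr_om_psis; rewrite eq_sym.
apply: commr_anticomm; last exact: psis_anticomm.
by rewrite addrC psi_psis_anticomm // eq_sym.
Qed.

Lemma commr_generator_zelt a x : clq_generators psi psis om omi x -> GRing.comm x (z a).
Proof.
case=> b [|[|[|]]] ->; [exact: commr_psi_zelt | exact: commr_psis_zelt
  | exact: commr_om_zelt | exact: commr_omi_zelt].
Qed.

End CliffordRelations.

Theorem lemma3p13 (F : fieldType) (A : algType F) (n k : nat) (q : F)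
  (psi psis om omi : 'I_n -> A) :
  (2 \notin [pchar F])%N -> q != 0 -> (0 < n)%N -> (0 < k)%N ->
  clq_relations k q psi psis om omi ->
  (forall x : A, in_generated_subalg (clq_generators psi psis om omi) x) ->
  forall a : 'I_n,
    [/\ (forall x : A, zelt k q psi psis om a * x = x * zelt k q psi psis om a),
        (forall r : nat, (0 < r)%N ->
           zelt k q psi psis om a ^+ r
           = q ^+ r *: om a ^+ r - (q ^+ r - 1) *: (psi a * psis a * om a ^+ (k + r))),
        zelt k q psi psis om a ^+ k = psi a * psis a + psis a * psi a
      & zelt k q psi psis om a ^+ (2 * k) = 1].
Proof.
move=> two_notin_pchar q_neq0 _ k_gt0 rel generated a; split.
- move=> x; apply/commr_sym/(commr_generated _ (generated x)) => y.
  exact: commr_generator_zelt two_notin_pchar q_neq0 k_gt0 rel a y.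
- by case=> // r _; apply: zelt_powS two_notin_pchar q_neq0 rel a r.
- exact: zelt_pow_k two_notin_pchar q_neq0 k_gt0 rel a.
- exact: zelt_pow_2k two_notin_pchar q_neq0 k_gt0 rel a.
Qed.
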